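(* Let $\mathcal L$ be a finite atomic lattice with atoms $A_1,\dots,A_n$ and $\mathcal G$ a building set in $\mathcal L$. Construct a fan $\Theta(\mathcal L,\mathcal G)$ in $\mathbb R^n$ as follows. (0) Let $\Theta_0$ be the fan consisting of the cone spanned by the standard basis vectors $e_1,\dots,e_n$ of $\mathbb R^n$ and all its faces. (1) Choose a linear order $\succ$ on $\mathcal G$ with $G\le G'$ in $\mathcal L$ implying $G'\succeq G$, and write $\mathcal G=\{G_1\succ G_2\succ\dots\succ G_t\}$. For $i=1,\dots,t$ successively, perform the stellar subdivision of the current fan at the cone $V(\lfloor G_i\rfloor)$ with new ray generated by $v_{G_i}$; call the resulting fan $\widetilde\Theta(\mathcal L,\mathcal G)$. (2) Remove from $\widetilde\Theta(\mathcal L,\mathcal G)$ all cones $V(\mathcal T)$ whose set $\mathcal T\subseteq\mathcal G$ of indices of generating vectors is not nested, and call the result $\Theta(\mathcal L,\mathcal G)$. Then $\Theta(\mathcal L,\mathcal G)$ coincides with the fan $\Sigma(\mathcal L,\mathcal G)=\{V(\mathcal S):\mathcal S\text{ nested in }\mathcal G\}$.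
   Context: A lattice is a finite poset in which every subset has a join $\vee$ and a meet; $\hat0$ is its least element; atomic means every element is a join of atoms. For $X\le Y$ write $[X,Y]=\{Z:X\le Z\le Y\}$ and $\mathcal G_{\le X}=\{G\in\mathcal G:G\le X\}$. A subset $\mathcal G\subseteq\mathcal L\setminus\{\hat0\}$ is a building set if for every $X\ne\hat0$, with $\{G_1,\dots,G_k\}$ the maximal elements of $\mathcal G_{\le X}$, there is a poset isomorphism $\prod_{i=1}^k[\hat0,G_i]\to[\hat0,X]$ sending $(\hat0,\dots,G_i,\dots,\hat0)$ to $G_i$ (in particular all atoms lie in $\mathcal G$). A subset $\mathcal S\subseteq\mathcal G$ is nested if for every set of pairwise incomparable $G_1,\dots,G_t\in\mathcal S$, $t\ge2$, $G_1\vee\dots\vee G_t\notin\mathcal G$. For $X\in\mathcal L$, $\lfloor X\rfloor$ is the set of atoms below $X$, and $v_X\in\mathbb R^n$ has $i$-th coordinate $1$ if $A_i\le X$ and $0$ otherwise (so $v_{A_i}=e_i$); $V(\mathcal S)$ is the cone spanned by $\{v_X:X\in\mathcal S\}$. The stellar subdivision of a fan $\Theta$ at a cone $\tau\in\Theta$ with new ray spanned by $v$ in the relative interior of $\tau$ replaces every cone $\sigma\in\Theta$ containing $\tau$ by the cones spanned by $\rho\cup\{v\}$ for all faces $\rho$ of $\sigma$ not containing $\tau$ (and these faces $\rho$ themselves); here $v_{G_i}$ is the sum of the generators $e_j$ of $V(\lfloor G_i\rfloor)$ (barycentric subdivision). *)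

From HB Require Import structures.
From mathcomp Require Import all_boot all_order all_algebra.
From mathcomp Require Import boolp classical_sets.
Set Implicit Arguments. Unset Strict Implicit. Unset Printing Implicit Defensive.
Import Order.TTheory GRing.Theory Num.Theory.

Section Lattice.
Context {d : Order.disp_t} (L : finTBLatticeType d).
Local Open Scope order_scope.

Definition is_atom (x : L) : Prop :=
  \bot < x /\ forall y : L, \bot < y -> y <= x -> y = x.

Definition atomic : Prop :=
  forall x : L, x = \join_(a : L | `[< is_atom a >] && (a <= x)) a.

Definition maxG (G : {set L}) (X : L) : {set L} :=
  [set g in G | (g <= X) && [forall h in G, ((h <= X) && (g <= h)) ==> (h == g)]].

(* elements of the product prod_{g in M} [\hat0, g], encoded as finite
   functions L -> L vanishing (= \bot) outside M *)
Definition prod_dom (M : {set L}) : {set {ffun L -> L}} :=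
  [set f : {ffun L -> L} | [forall g, if g \in M then f g <= g else f g == \bot]].

Definition prod_unit (g : L) : {ffun L -> L} :=
  [ffun h => if h == g then g else \bot].

Definition building_set (G : {set L}) : Prop :=
  \bot \notin G /\
  forall X : L, X != \bot ->
    let M := maxG G X in
    exists phi : {ffun L -> L} -> L,
      [/\ {in prod_dom M &, injective phi},
          phi @: prod_dom M = [set Y | Y <= X],
          {in prod_dom M &, forall f f', (phi f <= phi f') = [forall g, f g <= f' g]}
        & {in M, forall g, phi (prod_unit g) = g}].

Definition nested (G S : {set L}) : Prop :=
  S \subset G /\
  forall T : {set L}, T \subset S -> 1 < #|T|%N ->
    {in T &, forall x y, x != y -> ~~ (x >=< y)} ->
    \join_(g in T) g \notin G.

End Lattice.

Section Geometry.
Context {R : realFieldType} {n : nat}.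
Local Open Scope ring_scope.
Local Open Scope classical_set_scope.

Notation vec := 'rV[R]_n.

Definition cone (vs : seq vec) : set vec :=
  [set x | exists c : 'I_(size vs) -> R,
      (forall i, 0 <= c i) /\ x = \sum_(i < size vs) c i *: vs`_i].

Definition dotv (u x : vec) : R := (u *m x^T) 0 0.

Definition face (rho sigma : set vec) : Prop :=
  exists u : vec, (forall x, sigma x -> 0 <= dotv u x) /\
                  rho = sigma `&` [set x | dotv u x = 0].

Definition cone_add (rho : set vec) (v : vec) : set vec :=
  [set y | exists x c, rho x /\ 0 <= c /\ y = x + c *: v].

Definition stellar (Theta : set (set vec)) (tau : set vec) (v : vec)
  : set (set vec) :=
  [set sigma | (Theta sigma /\ ~ (tau `<=` sigma)) \/
     exists sigma0 rho, [/\ Theta sigma0, tau `<=` sigma0, face rho sigma0,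
                            ~ (tau `<=` rho) & (sigma = cone_add rho v \/ sigma = rho)]].

Definition ebasis (i : 'I_n) : vec := \row_(j < n) (if j == i then 1 else 0).

Definition Theta0 : set (set vec) :=
  [set sigma | face sigma (cone [seq ebasis i | i <- enum 'I_n])].

End Geometry.

Section Fans.
Context {R : realFieldType} {d : Order.disp_t} {L : finTBLatticeType d} {n : nat}.
Variable (A : 'I_n -> L).
Local Open Scope order_scope.
Local Open Scope classical_set_scope.

Definition vX (X : L) : 'rV[R]_n :=
  (\row_(i < n) (if (A i <= X)%O then 1 else 0))%R.

Definition Vcone (S : {set L}) : set 'rV[R]_n :=
  cone [seq vX X | X <- enum S].

Definition floor (X : L) : {set L} := finset (fun a : L => `[< is_atom a >] && (a <= X)).

Definition Theta_tilde (s : seq L) : set (set 'rV[R]_n) :=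
  foldl (fun Th g => stellar Th (Vcone (floor g)) (vX g)) Theta0 s.

(* set of indices G in G of the generating (extremal-ray) vectors of sigma *)
Definition gen_index (G : {set L}) (sigma : set 'rV[R]_n) (T : {set L}) : Prop :=
  forall g, g \in T <-> (g \in G /\ face (cone [:: vX g]) sigma).

Definition Theta_fan (G : {set L}) (s : seq L) : set (set 'rV[R]_n) :=
  [set sigma | Theta_tilde s sigma /\
     forall T : {set L}, gen_index G sigma T -> nested G T].

Definition Sigma_fan (G : {set L}) : set (set 'rV[R]_n) :=
  [set sigma | exists S : {set L}, nested G S /\ sigma = Vcone S].

End Fans.

(* The generators v_X of every cone met in the construction admit a dual
   basis, so each cone V(T) is simplicial: its faces are the V(T0) with
   T0 \subset T, its rays are the v_X with X in T, and V(floor G) \subset V(T)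
   forces floor G \subset T.  Hence each stellar subdivision acts on index sets
   alone, every cone of the subdivided fan is some V(T), and the pruning step
   keeps exactly those with T nested.  Conversely, a nested S shows up after
   k steps in the form "S with each element not among G_1, ..., G_k replaced by
   its atoms": at step k+1 the atoms of G_{k+1} are not all among the remaining
   generators, for otherwise G_{k+1} would lie below the join of an antichain
   of S, hence, by the product decomposition of a building set, below a single
   element of S, which the order of the G_i forbids. *)

From HB Require Import structures.
From mathcomp Require Import all_boot all_order all_algebra.
From mathcomp Require Import boolp classical_sets.
Import Order.TTheory GRing.Theory Num.Theory.
Set Implicit Arguments. Unset Strict Implicit. Unset Printing Implicit Defensive.

Section GeneratedCones.
Variables (R : realFieldType) (n : nat).
Local Open Scope ring_scope.
Local Open Scope classical_set_scope.
Notation vec := 'rV[R]_n.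

Lemma dotvE (u x : vec) : dotv u x = \sum_j u 0 j * x 0 j.
Proof. by rewrite /dotv !mxE; apply: eq_bigr => j _; rewrite mxE. Qed.

Lemma dotv_sumr (I : finType) (P : pred I) (u : vec) (F : I -> vec) :
  dotv u (\sum_(i | P i) F i) = \sum_(i | P i) dotv u (F i).
Proof. by rewrite /dotv linear_sum mulmx_sumr summxE. Qed.

Lemma dotv_suml (I : finType) (P : pred I) (x : vec) (F : I -> vec) :
  dotv (\sum_(i | P i) F i) x = \sum_(i | P i) dotv (F i) x.
Proof. by rewrite /dotv mulmx_suml summxE. Qed.

Lemma dotvZr (u : vec) c x : dotv u (c *: x) = c * dotv u x.
Proof. by rewrite /dotv linearZ /= -scalemxAr mxE. Qed.

Lemma dotvZl (u : vec) c x : dotv (c *: u) x = c * dotv u x.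
Proof. by rewrite /dotv -scalemxAl mxE. Qed.

Lemma dotvBl (u w x : vec) : dotv (u - w) x = dotv u x - dotv w x.
Proof. by rewrite /dotv mulmxBl !mxE. Qed.

Lemma sum_delta (I : finType) (A : {set I}) (a : I) :
  \sum_(b in A) ((b == a)%:R : R) = (a \in A)%:R.
Proof.
rewrite big_mkcond (bigD1 a) //= eqxx big1 ?addr0 => [|b /negbTE->]; last by case: ifP.
by case: (a \in A).
Qed.

Lemma sum_scale_delta (I : finType) (a : I) (F : I -> vec) :
  \sum_i ((i == a)%:R : R) *: F i = F a.
Proof.
by rewrite (bigD1 a) //= eqxx scale1r big1 ?addr0 // => i /negbTE->; rewrite scale0r.
Qed.

Lemma ebasisE (j k : 'I_n) : ebasis j 0 k = (k == j)%:R :> R.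
Proof. by rewrite mxE; case: eqP. Qed.

Lemma dotv_ebasisl (i : 'I_n) (x : vec) : dotv (ebasis i) x = x 0 i.
Proof.
rewrite dotvE (bigD1 i) //= ebasisE eqxx mul1r big1 ?addr0 // => j /negbTE ji.
by rewrite ebasisE ji mul0r.
Qed.

Lemma cone_nil : cone ([::] : seq vec) = [set 0].
Proof.
apply/seteqP; split => x /=; first by move=> [c [_ ->]]; rewrite big_ord0.
by move=> ->; exists (fun=> 0); rewrite big_ord0.
Qed.

Lemma cone_cons (v : vec) vs : cone (v :: vs) = cone_add (cone vs) v.
Proof.
apply/seteqP; split => y /=.
  move=> [c [c_ge0 ->]]; rewrite big_ord_recl /= addrC.
  exists (\sum_(i < size vs) c (lift ord0 i) *: vs`_i), (c ord0).
  by split => //; exists (fun i => c (lift ord0 i)).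
move=> [x [c0 [[c [c_ge0 ->]] [c0_ge0 ->]]]].
exists (fun i : 'I_(size vs).+1 => if unlift ord0 i is Some j then c j else c0).
split=> [i|]; first by case: (unlift ord0 i).
rewrite big_ord_recl /= unlift_none addrC; congr (_ + _).
by apply: eq_bigr => i _; rewrite liftK.
Qed.

Variables (I : finType) (f : I -> vec).

Lemma dotv_lincomb (u : vec) (c : I -> R) :
  dotv u (\sum_i c i *: f i) = \sum_i c i * dotv u (f i).
Proof. by rewrite dotv_sumr; apply: eq_bigr => i _; rewrite dotvZr. Qed.

Definition gen_cone (T : {set I}) : set vec :=
  [set x | exists c : I -> R, [/\ forall i, 0 <= c i, forall i, i \notin T -> c i = 0
                                & x = \sum_i c i *: f i]].

Lemma gen_cone_mem (T : {set I}) i : i \in T -> gen_cone T (f i).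
Proof.
move=> iT; exists (fun j => (j == i)%:R); split; rewrite ?sum_scale_delta //.
by move=> j jT; case: eqP jT => // ->; rewrite iT.
Qed.

Lemma subset_gen_cone (T1 T2 : {set I}) : T1 \subset T2 -> gen_cone T1 `<=` gen_cone T2.
Proof.
move=> sT x [c [c_ge0 cT ->]]; exists c; split => // i iT2.
by apply: cT; apply: contra iT2; apply: (fintype.subsetP sT).
Qed.

Lemma gen_cone0 : gen_cone finset.set0 = [set 0].
Proof.
apply/seteqP; split => x /=.
  by move=> [c [_ c0 ->]]; rewrite big1 // => i _; rewrite c0 ?inE ?scale0r.
by move=> ->; exists (fun=> 0); split => //; rewrite big1 // => i _; rewrite scale0r.
Qed.

Lemma cone_add_gen_cone (T : {set I}) g : cone_add (gen_cone T) (f g) = gen_cone (g |: T).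
Proof.
apply/seteqP; split => y /=.
  move=> [x [c0 [[c [c_ge0 cT ->]] [c0_ge0 ->]]]].
  exists (fun i => c i + (i == g)%:R * c0); split.
  - by move=> i; rewrite addr_ge0 // mulr_ge0 // ler0n.
  - by move=> i; rewrite !inE negb_or => /andP[/negbTE-> /cT->]; rewrite mul0r addr0.
  - rewrite -(sum_scale_delta g (fun i => c0 *: f i)) -big_split /=.
    by apply: eq_bigr => i _; rewrite scalerDl scalerA.
move=> [c [c_ge0 cT ->]].
pose c' i := if i == g then 0 else c i.
exists (\sum_i c' i *: f i), (c g); split; last split => //.
  exists c'; split => [i|i iT|//]; rewrite /c'; case: eqP => // /eqP ig.
  by apply: cT; rewrite !inE negb_or ig.
rewrite -(sum_scale_delta g (fun i => c g *: f i)) -big_split /=.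
apply: eq_bigr => i _; rewrite /c'; case: eqP => [->|_].
  by rewrite scale0r add0r scale1r.
by rewrite scale0r addr0.
Qed.

Lemma cone_map_gen_cone (r : seq I) : cone (map f r) = gen_cone [set x in r].
Proof.
elim: r => [|a r IH] /=.
  by rewrite cone_nil -gen_cone0; congr gen_cone; apply/setP => x; rewrite !inE.
rewrite cone_cons IH cone_add_gen_cone; congr gen_cone.
by apply/setP => x; rewrite !inE.
Qed.

Lemma gen_cone_set1 g x : gen_cone [set g] x -> exists c, x = c *: f g.
Proof.
move=> [c [_ cg ->]]; exists (c g); rewrite (bigD1 g) //= big1 ?addr0 // => i ig.
by rewrite cg ?scale0r // inE.
Qed.

Lemma gen_cone_hyperplane (T : {set I}) (u : vec) :
  (forall t, t \in T -> 0 <= dotv u (f t)) ->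
  gen_cone T `&` [set x | dotv u x = 0] = gen_cone [set t in T | dotv u (f t) == 0].
Proof.
move=> u_ge0; have term_ge0 c i : (forall i, 0 <= c i) -> (forall i, i \notin T -> c i = 0) ->
    0 <= c i * dotv u (f i).
  move=> c_ge0 cT; case: (boolP (i \in T)) => [/u_ge0|/cT->]; last by rewrite mul0r.
  exact: mulr_ge0.
apply/seteqP; split => x /=.
  move=> [[c [c_ge0 cT ->]] /=]; rewrite dotv_lincomb.
  move=> /psumr_eq0P-/(_ (fun i _ => term_ge0 c i c_ge0 cT)) c_dot0.
  exists c; split => // i; rewrite inE negb_and => /orP[/cT //|].
  move=> /negbTE dot_nz; apply/eqP; move/eqP: (c_dot0 i isT).
  by rewrite mulf_eq0 dot_nz orbF.
move=> [c [c_ge0 cT ->]]; split.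
  by exists c; split => // i iT; apply: cT; rewrite inE (negbTE iT).
rewrite /= dotv_lincomb big1 // => i _.
case: (boolP (i \in [set t in T | dotv u (f t) == 0])) => [|/cT->]; last by rewrite mul0r.
by rewrite inE => /andP[_ /eqP->]; rewrite mulr0.
Qed.

Lemma face_gen_cone (T : {set I}) rho :
  face rho (gen_cone T) -> exists2 T0 : {set I}, T0 \subset T & rho = gen_cone T0.
Proof.
move=> [u [u_ge0 ->]]; exists [set t in T | dotv u (f t) == 0].
  by apply/fintype.subsetP => t; rewrite inE => /andP[].
by apply: gen_cone_hyperplane => t tT; apply/u_ge0/gen_cone_mem.
Qed.

Definition dual_basis (T : {set I}) :=
  forall t, t \in T -> exists u, forall t', t' \in T -> dotv u (f t') = (t == t')%:R.

Lemma dual_basis_sub (T T0 : {set I}) : dual_basis T -> T0 \subset T -> dual_basis T0.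
Proof.
move=> hT sT t /(fintype.subsetP sT)/hT [u hu].
by exists u => t' /(fintype.subsetP sT); apply: hu.
Qed.

Lemma gen_cone_face (T T0 : {set I}) :
  dual_basis T -> T0 \subset T -> face (gen_cone T0) (gen_cone T).
Proof.
move=> hT sT.
have /choice [uf huf] : forall t, exists u, t \in T ->
    forall t', t' \in T -> dotv u (f t') = (t == t')%:R.
  by move=> t; case: (boolP (t \in T)) => [/hT [u hu]|_]; [exists u | exists 0].
pose u := \sum_(t in T :\: T0) uf t.
have u_dot t' : t' \in T -> dotv u (f t') = (t' \in T :\: T0)%:R.
  move=> t'T; rewrite dotv_suml -sum_delta; apply: eq_bigr => t.
  by rewrite inE => /andP[_ tT]; apply: huf.
exists u; split.
  move=> x [c [c_ge0 cT ->]]; rewrite dotv_lincomb sumr_ge0 // => i _.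
  by case: (boolP (i \in T)) => [/u_dot->|/cT->]; rewrite ?mul0r // mulr_ge0.
rewrite gen_cone_hyperplane => [|t /u_dot->//]; congr gen_cone; apply/setP => t.
rewrite inE; case: (boolP (t \in T)) => [tT|tT] /=.
  by rewrite u_dot // !inE tT andbT pnatr_eq0 eqb0 negbK.
by apply: contraNF tT; apply: (fintype.subsetP sT).
Qed.

Lemma gen_cone_ebasis (T : {set I}) (j : 'I_n) :
  (forall i k, 0 <= f i 0 k) -> gen_cone T (ebasis j) ->
  exists2 t, t \in T & f t 0 j != 0 /\ forall k, k != j -> f t 0 k = 0.
Proof.
move=> f_ge0 [c [c_ge0 cT e]].
have coord k : (k == j)%:R = \sum_t c t * f t 0 k.
  by rewrite -ebasisE e summxE; apply: eq_bigr => t _; rewrite mxE.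
have term_ge0 k t : true -> 0 <= c t * f t 0 k by move=> _; rewrite mulr_ge0.
have [t /andP[ct0 ft0]] : exists t, (c t != 0) && (f t 0 j != 0).
  apply/existsP; apply: contraT; rewrite negb_exists => /forallP none.
  move: (coord j); rewrite eqxx big1 => [/eqP|t _]; first by rewrite oner_eq0.
  by move: (none t); rewrite negb_and !negbK => /orP[]/eqP->; rewrite ?mul0r ?mulr0.
exists t; first by apply: contraNT ct0 => /cT->.
split => // k kj; move: (coord k); rewrite (negbTE kj) => /esym/psumr_eq0P.
move=> /(_ (term_ge0 k)) /(_ t isT) /eqP.
by rewrite mulf_eq0 (negbTE ct0) => /eqP.
Qed.

End GeneratedCones.

Section FiniteLattices.
Variables (disp : Order.disp_t) (L : finTBLatticeType disp).
Local Open Scope order_scope.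

Definition maximal (H : {set L}) : {set L} :=
  [set m in H | [forall y in H, (m <= y) ==> (y == m)]].

Lemma exists_maximal_le (H : {set L}) h : h \in H -> exists2 m, m \in maximal H & h <= m.
Proof.
move=> hH; pose down (m : L) := #|[set y | y <= m]|.
have [|m /andP[mH hm] m_max] := @arg_maxnP _ h [pred m | (m \in H) && (h <= m)] down.
  by rewrite /= hH lexx.
exists m => //; rewrite inE mH; apply/forall_inP => y yH; apply/implyP => my.
have /m_max : (y \in H) && (h <= y) by rewrite yH (le_trans hm my).
rewrite /down => le_card; have : [set z | z <= m] = [set z | z <= y].
  apply/eqP; rewrite eqEcard [(#|_| <= _)%N]le_card andbT.
  by apply/fintype.subsetP => z; rewrite !inE => /le_trans; apply.
by move/setP/(_ y); rewrite !inE lexx => ym; rewrite eq_le ym.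
Qed.

Lemma maximal_sub (H : {set L}) : maximal H \subset H.
Proof. by apply/fintype.subsetP => m; rewrite inE => /andP[]. Qed.

Lemma maximal_antichain (H : {set L}) :
  {in maximal H &, forall x y, x != y -> ~~ (x >=< y)}.
Proof.
have le_max x y : x \in maximal H -> y \in maximal H -> x <= y -> y = x.
  by rewrite !inE => /andP[_ /forall_inP x_max] /andP[yH _] /(implyP (x_max y yH)) /eqP.
move=> x y xM yM xy; apply/negP => /orP[/(le_max _ _ xM yM) e|/(le_max _ _ yM xM) e];
  by rewrite e eqxx in xy.
Qed.

Lemma join_maximal (H : {set L}) : \join_(x in maximal H) x = \join_(x in H) x.
Proof.
apply/le_anti; rewrite le_joins ?maximal_sub //=.
by apply/joinsP => h /exists_maximal_le [m mM hm]; apply: le_trans hm (joins_sup _ mM).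
Qed.

Lemma maxGE (G : {set L}) X : maxG G X = maximal [set g in G | g <= X].
Proof.
apply/setP => g; rewrite !inE -andbA; congr [&& _, _ & _].
by apply: eq_forallb => h; rewrite inE; case: (h \in G); case: (h <= X).
Qed.

Lemma maxGP (G : {set L}) X m : m \in maxG G X -> m \in G /\ m <= X.
Proof. by rewrite inE => /and3P[]. Qed.

Lemma exists_maxG_le (G : {set L}) X h : h \in G -> h <= X ->
  exists2 m, m \in maxG G X & h <= m.
Proof. by move=> hG hX; rewrite maxGE; apply: exists_maximal_le; rewrite inE hG. Qed.

Lemma le_atom (a x : L) : is_atom x -> \bot < a -> a <= x -> a = x.
Proof. by case=> _; apply. Qed.

Lemma floorE (a X : L) : (a \in floor X) = `[< is_atom a >] && (a <= X).
Proof. by rewrite inE. Qed.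

Lemma le_join_of_floor (W : {set L}) g : atomic L ->
  (forall a, a \in floor g -> exists2 x, x \in W & a <= x) -> g <= \join_(x in W) x.
Proof.
move=> L_atomic cover; rewrite (L_atomic g); apply/joinsP => a a_floor.
have [x xW ax] : exists2 x, x \in W & a <= x by apply: cover; rewrite floorE.
exact: le_trans ax (joins_sup _ xW).
Qed.

End FiniteLattices.

Section BuildingSets.
Variables (disp : Order.disp_t) (L : finTBLatticeType disp).
Local Open Scope order_scope.

Lemma prod_unit_dom (M : {set L}) m : m \in M -> prod_unit m \in prod_dom M.
Proof.
move=> mM; rewrite inE; apply/forallP => h; rewrite ffunE.
by case: eqP => [->|_]; rewrite ?mM //; case: ifP.
Qed.

Lemma prod_dom_le (M : {set L}) f g :
  f \in prod_dom M -> f g <= if g \in M then g else \bot.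
Proof. by rewrite inE => /forallP/(_ g); case: ifP => // _ /eqP->. Qed.

Section ProductDecomposition.
Variables (G : {set L}) (X : L) (phi : {ffun L -> L} -> L).
Let M := maxG G X.
Hypotheses (phi_onto : phi @: prod_dom M = [set Y | Y <= X])
  (phi_le : {in prod_dom M &, forall f f', (phi f <= phi f') = [forall g, f g <= f' g]})
  (phi_unit : {in M, forall g, phi (prod_unit g) = g}).

Lemma phi_surj Y : Y <= X -> exists2 f, f \in prod_dom M & Y = phi f.
Proof.
move=> YX; have /imsetP[f fM ->] : Y \in phi @: prod_dom M by rewrite phi_onto inE.
by exists f.
Qed.

Lemma le_phi_unit m f : m \in M -> f \in prod_dom M -> (m <= phi f) = (m <= f m).
Proof.
move=> mM fM; rewrite -{1}(phi_unit mM) phi_le ?prod_unit_dom //.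
apply/forallP/idP => [/(_ m)|mf g]; rewrite ffunE ?eqxx //.
by case: eqP => [->//|_]; apply: le0x.
Qed.

Lemma phi_le_unit_bot m m' f : m \in M -> m' \in M -> m != m' -> f \in prod_dom M ->
  phi f <= m' -> f m = \bot.
Proof.
move=> mM m'M mm' fM; rewrite -(phi_unit m'M) phi_le ?prod_unit_dom //.
by move/forallP/(_ m); rewrite ffunE (negbTE mm') lex0 => /eqP.
Qed.

Lemma maxG_le_join_below (W : {set L}) m : W \subset G -> X = \join_(w in W) w ->
  m \in M -> m <= \join_(w in [set w in W | w <= m]) w.
Proof.
move=> WG eX mM; set Y := \join_(w in _) w.
have [fY fYM eY] : exists2 f, f \in prod_dom M & Y = phi f.
  apply: phi_surj; rewrite eX; apply/joinsP => w.
  by rewrite inE => /andP[wW _]; apply: joins_sup.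
(* k is the top of the product with its m-component lowered to that of Y.
   Each w in W lies below phi k (either w <= m, or the m-component of w is
   bot), so m <= X <= phi k, whence m <= fY m, i.e. m <= Y. *)
pose k : {ffun L -> L} :=
  [ffun h => if h == m then fY m else if h \in M then h else \bot].
have kM : k \in prod_dom M.
  rewrite inE; apply/forallP => h; rewrite ffunE.
  case: eqP => [->|_]; last by case: (h \in M).
  by rewrite mM; move: (prod_dom_le m fYM); rewrite mM.
have wX w : w \in W -> w <= X by rewrite eX; apply: joins_sup.
have Xk : X <= phi k.
  rewrite [X in X <= _]eX; apply/joinsP => w wW; have [fw fwM ew] := phi_surj (wX w wW).
  rewrite ew phi_le //; apply/forallP => h; rewrite ffunE.
  case: eqP => [->|_]; last first.
    by move: (prod_dom_le h fwM); case: ifP => // _; rewrite lex0 => /eqP->.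
  have [wm|wm] := boolP (w <= m).
    have : w <= Y by apply: joins_sup; rewrite inE wW wm.
    by rewrite ew eY phi_le // => /forallP; apply.
  have [m' m'M wm'] := exists_maxG_le (fintype.subsetP WG w wW) (wX w wW).
  have mm' : m != m' by apply: contraNneq wm => ->.
  by rewrite (phi_le_unit_bot mM m'M mm' fwM) -?ew.
have mk : m <= k m by rewrite -le_phi_unit //; apply: le_trans Xk; case: (maxGP mM).
by rewrite eY le_phi_unit //; move: mk; rewrite ffunE eqxx.
Qed.

End ProductDecomposition.

Variable G : {set L}.
Hypothesis G_building : building_set G.

Lemma building_set_neq_bot g : g \in G -> g != \bot.
Proof. by case: G_building => botG _ gG; apply: contraNneq botG => <-. Qed.

Lemma building_set_atom a : is_atom a -> a \in G.
Proof.
move=> a_atom; have a_neq0 : a != \bot by rewrite -lt0x; case: a_atom.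
have [phi [_ phi_onto _ _]] := G_building.2 a a_neq0.
apply: contraT => aG.
have dom_bot f : f \in prod_dom (maxG G a) -> f = [ffun => \bot].
  move=> fM; apply/ffunP => g; rewrite ffunE; apply/eqP; rewrite -lex0.
  move: (prod_dom_le g fM); case: ifP => // /maxGP [gG ga].
  have ga' : g = a by apply: le_atom a_atom _ ga; rewrite lt0x building_set_neq_bot.
  by rewrite -ga' gG in aG.
have [f1 f1M e1] := phi_surj phi_onto (le0x a).
have [f2 f2M e2] := phi_surj phi_onto (lexx a).
by move: a_neq0; rewrite e2 e1 (dom_bot _ f1M) (dom_bot _ f2M) eqxx.
Qed.

Lemma nested_le_join (S W : {set L}) g : nested G S -> W \subset S -> g \in G ->
  g <= \join_(x in W) x -> exists2 x, x \in W & g <= x.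
Proof.
move=> [SG S_nested] WS gG; rewrite -join_maximal; set W' := maximal W => gW.
have W'S : W' \subset S := fintype.subset_trans (maximal_sub W) WS.
have W'G : W' \subset G := fintype.subset_trans W'S SG.
have [m mM gm] := exists_maxG_le gG gW; have [mG mX] := maxGP mM.
have X_neq0 : \join_(x in W') x != \bot.
  by apply: contraTneq mX => ->; rewrite lex0 building_set_neq_bot.
have [phi [_ phi_onto phi_le phi_unit]] := G_building.2 _ X_neq0.
have := maxG_le_join_below phi_onto phi_le phi_unit W'G erefl mM.
set Wm := [set w in W' | w <= m] => m_le_join.
have WmW' : Wm \subset W' by apply/fintype.subsetP => w; rewrite inE => /andP[].
have eWm : \join_(w in Wm) w = m.
  by apply/le_anti; rewrite m_le_join andbT; apply/joinsP => w; rewrite inE => /andP[].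
(* m is the join of the antichain Wm of S, so nestedness forces Wm = [set w]. *)
case: (ltngtP #|Wm| 1) => [|Wm_big|/eqP/cards1P [w eW]].
- rewrite ltnS leqn0 cards_eq0 => /eqP Wm0.
  by move: (building_set_neq_bot mG); rewrite -eWm Wm0 big_set0 eqxx.
- have Wm_anti : {in Wm &, forall x y, x != y -> ~~ (x >=< y)}.
    by move=> x y /(fintype.subsetP WmW') xW' /(fintype.subsetP WmW'); apply: maximal_antichain.
  by have := S_nested Wm (fintype.subset_trans WmW' W'S) Wm_big Wm_anti; rewrite eWm mG.
- exists w; last by rewrite (le_trans gm) // -eWm eW big_set1.
  by apply: (fintype.subsetP (maximal_sub W)); apply: (fintype.subsetP WmW'); rewrite eW set11.
Qed.

End BuildingSets.

Section AtomVectors.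
Variables (R : realFieldType) (disp : Order.disp_t) (L : finTBLatticeType disp)
  (n : nat) (A : 'I_n -> L).
Hypotheses (A_inj : injective A) (A_atoms : forall x : L, is_atom x <-> exists i, x = A i)
  (L_atomic : atomic L).
Local Notation vX := (@vX R disp L n A).
Local Open Scope ring_scope.
Local Open Scope classical_set_scope.

Lemma atomA i : is_atom (A i).
Proof. by apply/A_atoms; exists i. Qed.

Lemma leA i j : (A i <= A j)%O = (i == j).
Proof.
apply/idP/eqP => [ij|->//]; apply: A_inj; apply: le_atom (atomA j) _ ij.
by case: (atomA i).
Qed.

Lemma vXE x i : vX x 0 i = if (A i <= x)%O then 1 else 0.
Proof. by rewrite mxE. Qed.

Lemma vX_ge0 x i : 0 <= vX x 0 i.
Proof. by rewrite vXE; case: ifP. Qed.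

Lemma le_of_atoms x y : (forall i, A i <= x -> A i <= y)%O -> (x <= y)%O.
Proof.
move=> xy; rewrite (L_atomic x); apply/joinsP => a /andP[/asboolP /A_atoms [i ->]].
exact: xy.
Qed.

Lemma exists_atom_le x : x != \bot%O -> exists i, (A i <= x)%O.
Proof.
move=> x_neq0; apply: contrapT => no_atom; move/eqP: x_neq0; apply.
apply/le_anti; rewrite le0x andbT; apply: le_of_atoms => i Aix.
by case: no_atom; exists i.
Qed.

Lemma vX_inj : injective vX.
Proof.
move=> x y e; have Axy i : (A i <= x)%O = (A i <= y)%O.
  move/rowP/(_ i): e; rewrite !vXE.
  by case: ifP => _; case: ifP => _ // /eqP; rewrite ?(eq_sym 0) oner_eq0.
by apply/le_anti; rewrite !le_of_atoms // => i; rewrite Axy.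
Qed.

Lemma vX_atom i : vX (A i) = ebasis i.
Proof. by apply/rowP => j; rewrite vXE ebasisE leA; case: eqP. Qed.

Lemma vX_floor g : vX g = \sum_(b in floor g) vX b.
Proof.
apply/rowP => k; rewrite summxE vXE.
rewrite (eq_bigr (fun b => (b == A k)%:R)) => [|b]; last first.
  rewrite floorE => /andP[/asboolP /A_atoms [i ->] _].
  by rewrite vX_atom ebasisE (inj_eq A_inj) eq_sym.
by rewrite sum_delta floorE (asboolT (atomA k)); case: ifP.
Qed.

Lemma Vcone_gen_cone S : Vcone A S = gen_cone vX S.
Proof.
by rewrite /Vcone cone_map_gen_cone; congr gen_cone; apply/setP => x; rewrite inE mem_enum.
Qed.

Lemma vX_eq_scale t g c : t != \bot%O -> vX t = c *: vX g -> t = g.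
Proof.
move=> t_neq0 e; have [i Ait] := exists_atom_le t_neq0.
move/rowP/(_ i): (e); rewrite !mxE Ait.
case: ifP => _; last by rewrite mulr0 => /eqP; rewrite oner_eq0.
by rewrite mulr1 => c1; apply: vX_inj; rewrite e -c1 scale1r.
Qed.

Lemma floor_sub_of_cone_sub g T :
  gen_cone vX (floor g) `<=` gen_cone vX T -> floor g \subset T.
Proof.
move=> sub; apply/fintype.subsetP => a a_floor.
have /asboolP /A_atoms [j ea] : `[< is_atom a >].
  by move: a_floor; rewrite floorE => /andP[].
have := sub _ (gen_cone_mem vX a_floor); rewrite ea vX_atom.
move=> /(gen_cone_ebasis vX_ge0) [t tT [vt_j vt_k]].
suff -> : A j = t by [].
apply: vX_inj; apply/rowP => k; rewrite vX_atom ebasisE.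
case: eqVneq => [->|kj]; last by rewrite vt_k.
by move: vt_j; rewrite vXE; case: ifP => //; rewrite eqxx.
Qed.

Lemma face_ray_gen_cone (T : {set L}) g : \bot%O \notin T -> g != \bot%O ->
  dual_basis vX T -> face (cone [:: vX g]) (gen_cone vX T) <-> g \in T.
Proof.
move=> botT g_neq0 T_dual; have -> : cone [:: vX g] = gen_cone vX [set g].
  by rewrite (cone_map_gen_cone vX [:: g]); congr gen_cone; apply/setP => x; rewrite !inE.
split => [|gT]; last by apply: gen_cone_face; rewrite ?finset.sub1set.
move=> /face_gen_cone [T0 T0T e].
have [t tT0] : exists t, t \in T0.
  apply/set0Pn; apply: contraT => /negPn/eqP T00.
  have [i Aig] := exists_atom_le g_neq0.
  have : gen_cone vX T0 (vX g) by rewrite -e; apply: gen_cone_mem; rewrite set11.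
  by rewrite T00 gen_cone0 => /rowP/(_ i); rewrite vXE Aig mxE => /eqP; rewrite oner_eq0.
have tT := fintype.subsetP T0T t tT0.
have [c vt] : exists c, vX t = c *: vX g.
  by apply: gen_cone_set1; rewrite e; apply: gen_cone_mem.
by rewrite -(vX_eq_scale _ vt) //; apply: contraNneq botT => <-.
Qed.

Lemma gen_index_gen_cone (G T T' : {set L}) : \bot%O \notin G -> T \subset G ->
  dual_basis vX T -> gen_index A G (gen_cone vX T) T' <-> T' = T.
Proof.
move=> botG TG T_dual.
have botT : \bot%O \notin T by apply: contra botG; apply: (fintype.subsetP TG).
have ray g : g \in G -> face (cone [:: vX g]) (gen_cone vX T) <-> g \in T.
  by move=> gG; apply: face_ray_gen_cone => //; apply: contraNneq botG => <-.
split => [index|-> g]; last first.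
  split => [gT|[gG /(ray g gG)]//].
  by have gG := fintype.subsetP TG g gT; split => //; apply/ray.
apply/setP => g; apply/idP/idP => [/index [gG /(ray g gG)]//|gT].
by have gG := fintype.subsetP TG g gT; apply/index; split => //; apply/ray.
Qed.

End AtomVectors.

Section NestedStages.
Variables (disp : Order.disp_t) (L : finTBLatticeType disp).
Local Open Scope order_scope.

Definition atom_set : {set L} := [set a | `[< is_atom a >]].

Definition orthant_index : set {set L} := [set T | T \subset atom_set]%classic.

Definition stellar_index (D : set {set L}) (g : L) : set {set L} :=
  [set T | (D T /\ ~~ (floor g \subset T)) \/
     exists sigma rho : {set L}, [/\ D sigma, floor g \subset sigma, rho \subset sigma,
        ~~ (floor g \subset rho) & (T = g |: rho \/ T = rho)]]%classic.

(* The index set that a nested S has after the subdivisions along p. *)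
Definition stage (S : {set L}) (p : seq L) : {set L} :=
  (S :&: [set x in p]) :|: \bigcup_(u in S | u \notin p) floor u.

Lemma stage_nil_sub (S : {set L}) : stage S [::] \subset atom_set.
Proof.
apply/fintype.subsetP => a; rewrite !inE andbF => /bigcupP [u _].
by rewrite floorE => /andP[/asboolP].
Qed.

Lemma stage_all (S : {set L}) (p : seq L) : {subset S <= p} -> stage S p = S.
Proof.
move=> Sp; rewrite /stage big_pred0 => [|u]; last by case: (boolP (u \in S)) => //= /Sp ->.
by rewrite finset.setU0; apply/finset.setIidPl/fintype.subsetP => x xS; rewrite inE Sp.
Qed.

Lemma stage_rcons (S : {set L}) (p : seq L) g :
  stage S (rcons p g) = stage (S :\ g) p :|: (S :&: [set g]).
Proof.
rewrite /stage; have -> : \bigcup_(u in S | u \notin rcons p g) floor u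
                          = \bigcup_(u in S :\ g | u \notin p) floor u.
  by apply: eq_bigl => u; rewrite !inE mem_rcons in_cons negb_or andbA [(u \in S) && _]andbC.
apply/setP => x; rewrite !inE mem_rcons in_cons.
by case: (x == g); case: (x \in S); case: (x \in p); case: (x \in \bigcup_(_ in _ | _) _).
Qed.

Lemma stage_setD1 (S : {set L}) (p : seq L) g : g \in S -> g \notin p ->
  stage S p = stage (S :\ g) p :|: floor g.
Proof.
move=> gS gp; rewrite /stage -finset.setUA; congr (_ :|: _).
  by apply/setP => x; rewrite !inE; case: eqP => // ->; rewrite (negbTE gp) andbF.
rewrite (bigD1 g) /= ?gS ?gp // finset.setUC; congr (_ :|: _).
by apply: eq_bigl => u; rewrite !inE andbC andbA.
Qed.

Lemma stellar_index_stage D (S : {set L}) (p : seq L) g : g \notin p -> D (stage S p) ->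
  ~~ (floor g \subset stage (S :\ g) p) -> stellar_index D g (stage S (rcons p g)).
Proof.
move=> gp DS floor_out; rewrite stage_rcons.
have [gS|gS] := boolP (g \in S).
  have e := stage_setD1 gS gp.
  right; exists (stage S p), (stage (S :\ g) p); split => //.
  - by rewrite e finset.subsetUr.
  - by rewrite e finset.subsetUl.
  - by left; rewrite (finset.setIidPr _) ?finset.sub1set // finset.setUC.
have Sg : S :\ g = S.
  by apply/setP => x; rewrite !inE; case: eqVneq => // ->; rewrite (negbTE gS).
have Sg0 : S :&: [set g] = finset.set0.
  apply/setP => x; rewrite !inE.
  by case: eqVneq; rewrite ?andbF ?andbT // => ->; rewrite (negbTE gS).
by left; rewrite Sg0 finset.setU0 Sg; rewrite Sg in floor_out.
Qed.

Variables (G : {set L}) (s : seq L).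
Hypotheses (G_building : building_set G) (L_atomic : atomic L)
  (s_uniq : uniq s) (s_G : forall g, (g \in s) = (g \in G))
  (s_sorted : forall i j, (i < size s)%N -> (j < size s)%N ->
     nth \bot s i <= nth \bot s j -> (j <= i)%N).

Lemma upper_in_prefix k x : (k < size s)%N -> x \in G -> nth \bot s k <= x ->
  x \in take k.+1 s.
Proof.
move=> ks xG gx; have xs : x \in s by rewrite s_G.
have := s_sorted ks (_ : index x s < size s)%N.
by rewrite index_mem nth_index // => /(_ xs gx); rewrite in_take // ltnS.
Qed.

Lemma floor_not_sub_stage (S : {set L}) k : nested G S -> (k < size s)%N ->
  ~~ (floor (nth \bot s k) \subset stage (S :\ nth \bot s k) (take k s)).
Proof.
move=> S_nested ks; set g := nth \bot s k; set p := take k s.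
have gG : g \in G by rewrite -s_G mem_nth.
apply/negP => sub.
(* Atoms of S already reached by s, and elements of S other than g not yet
   reached: g below one of them contradicts the order of s. *)
pose W := [set x in S :\ g | (x \notin p) || `[< is_atom x >]].
have WS : W \subset S by apply/fintype.subsetP => x; rewrite !inE => /andP[/andP[]].
have gW : g <= \join_(x in W) x.
  apply: le_join_of_floor => // a a_floor; move: (fintype.subsetP sub a a_floor).
  rewrite !inE => /orP[/andP[aSg ap]|/bigcupP [u /andP[uSg up] au]].
    exists a => //; rewrite /W finset.in_set in_setD1 aSg /=.
    by move: a_floor; rewrite floorE => /andP[-> _]; rewrite orbT.
  by exists u; [rewrite inE uSg up | move: au; rewrite floorE => /andP[]].
have [x] := nested_le_join G_building S_nested WS gG gW.
rewrite !inE => /andP[/andP[xg xS] /orP[xp|/asboolP x_atom]] gx.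
  move: (upper_in_prefix ks (fintype.subsetP S_nested.1 x xS) gx).
  by rewrite (take_nth \bot ks) mem_rcons in_cons (negbTE xg) (negbTE xp).
have g_neq0 := building_set_neq_bot G_building gG.
by move: xg; rewrite -(le_atom x_atom _ gx) ?eqxx // lt0x.
Qed.

Lemma nested_in_stellar_index (S : {set L}) :
  nested G S -> foldl stellar_index orthant_index s S.
Proof.
move=> S_nested; suff stage_k k : (k <= size s)%N ->
    foldl stellar_index orthant_index (take k s) (stage S (take k s)).
  move: (stage_k _ (leqnn _)); rewrite take_size stage_all // => x xS.
  by rewrite s_G (fintype.subsetP S_nested.1).
elim: k => [_|k IH ks]; first by rewrite take0; apply: stage_nil_sub.
rewrite (take_nth \bot ks) foldl_rcons; apply: stellar_index_stage (IH (ltnW ks)) _.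
  by rewrite in_take ?mem_nth // index_uniq // ltnn.
exact: floor_not_sub_stage.
Qed.

End NestedStages.

Arguments atom_set {disp L}.
Arguments orthant_index {disp L}.
Arguments stellar_index {disp L}.

Section StellarModel.
Variables (R : realFieldType) (disp : Order.disp_t) (L : finTBLatticeType disp)
  (n : nat) (A : 'I_n -> L) (G : {set L}).
Hypotheses (A_inj : injective A) (A_atoms : forall x : L, is_atom x <-> exists i, x = A i)
  (L_atomic : atomic L) (G_building : building_set G).
Local Notation vX := (@vX R disp L n A).
Local Open Scope ring_scope.
Local Open Scope classical_set_scope.

Definition cones_of (D : set {set L}) : set (set 'rV[R]_n) :=
  [set sigma | exists2 T, D T & sigma = gen_cone vX T].

Definition admissible (D : set {set L}) :=
  forall T, D T -> T \subset G /\ dual_basis vX T.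

Lemma dual_basis_setU1 (sigma rho : {set L}) g : dual_basis vX sigma ->
  floor g \subset sigma -> rho \subset sigma -> ~~ (floor g \subset rho) ->
  dual_basis vX (g |: rho).
Proof.
move=> sigma_dual g_sigma rho_sigma g_rho.
have [g_in|g_out] := boolP (g \in rho).
  by rewrite (finset.setUidPr _) ?finset.sub1set //; apply: dual_basis_sub rho_sigma.
have [a a_floor a_rho] := subsetPn g_rho.
have [ua ua_dual] := sigma_dual a (fintype.subsetP g_sigma a a_floor).
have ua_g : dotv ua (vX g) = 1.
  rewrite (vX_floor R A_inj A_atoms) dotv_sumr.
  transitivity (\sum_(b in floor g) ((b == a)%:R : R)); last by rewrite sum_delta a_floor.
  by apply: eq_bigr => b b_floor; rewrite ua_dual ?(fintype.subsetP g_sigma) // eq_sym.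
have neq_rho t : t \in rho -> (a == t) = false /\ (g == t) = false.
  by move=> t_rho; split; [apply: contraNF a_rho | apply: contraNF g_out] => /eqP->.
move=> t /setU1P [->|t_rho].
  exists ua => t' /setU1P [->|t'_rho]; first by rewrite ua_g eqxx.
  have [at' gt'] := neq_rho t' t'_rho.
  by rewrite gt' ua_dual ?at' ?(fintype.subsetP rho_sigma).
have [ut ut_dual] := sigma_dual t (fintype.subsetP rho_sigma t t_rho).
exists (ut - dotv ut (vX g) *: ua) => t' /setU1P [->|t'_rho].
  by rewrite dotvBl dotvZl ua_g mulr1 subrr eq_sym; case: (neq_rho t t_rho) => _ ->.
have t'_sigma := fintype.subsetP rho_sigma t' t'_rho.
rewrite dotvBl dotvZl ut_dual // ua_dual //.
by case: (neq_rho t' t'_rho) => -> _; rewrite mulr0 subr0.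
Qed.

Lemma admissible_stellar D g : admissible D -> g \in G -> admissible (stellar_index D g).
Proof.
move=> D_adm gG T [[/D_adm //]|[sigma [rho [/D_adm [sigmaG sigma_dual] ]]]].
move=> g_sigma rho_sigma g_rho.
have rhoG := fintype.subset_trans rho_sigma sigmaG.
case=> ->; split => //; last exact: dual_basis_sub rho_sigma.
  by rewrite finset.subUset finset.sub1set gG.
exact: dual_basis_setU1 g_sigma rho_sigma g_rho.
Qed.

Lemma stellar_cones_of D g : admissible D ->
  stellar (cones_of D) (Vcone A (floor g)) (vX g) = cones_of (stellar_index D g).
Proof.
move=> D_adm; rewrite Vcone_gen_cone; apply/seteqP; split => sigma /=.
  case=> [[[T DT ->] g_T]|[_ [rho [[T DT ->] g_T /face_gen_cone [T0 T0T ->] g_T0 e]]]].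
    by exists T => //; left; split => //; apply/negP => sub; apply/g_T/subset_gen_cone.
  have g_T0' : ~~ (floor g \subset T0) by apply/negP => sub; apply/g_T0/subset_gen_cone.
  have g_T' := floor_sub_of_cone_sub A_inj A_atoms L_atomic g_T.
  case: e => ->.
    exists (g |: T0); last by rewrite cone_add_gen_cone.
    by right; exists T, T0; split => //; left.
  by exists T0 => //; right; exists T, T0; split => //; right.
move=> [T [[DT g_T]|[S [rho [DS g_S rho_S g_rho e]]]] ->].
  left; split; first by exists T.
  by move/(floor_sub_of_cone_sub A_inj A_atoms L_atomic); apply/negP.
right; exists (gen_cone vX S), (gen_cone vX rho); split.
- by exists S.
- exact: subset_gen_cone.
- by apply: gen_cone_face rho_S; case: (D_adm _ DS).
- by move/(floor_sub_of_cone_sub A_inj A_atoms L_atomic); apply/negP.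
- by case: e => ->; [left; rewrite cone_add_gen_cone | right].
Qed.

Lemma dual_basis_atoms : dual_basis vX atom_set.
Proof.
move=> t; rewrite finset.in_set => /asboolP/A_atoms [i ->]; exists (ebasis i).
move=> t'; rewrite finset.in_set => /asboolP/A_atoms [k ->].
by rewrite dotv_ebasisl (vX_atom R A_inj A_atoms) ebasisE (inj_eq A_inj) eq_sym.
Qed.

Lemma Theta0_cones_of : Theta0 = cones_of orthant_index.
Proof.
have e : cone [seq ebasis i | i <- enum 'I_n] = gen_cone vX atom_set.
  rewrite -(eq_map (vX_atom R A_inj A_atoms)) (map_comp vX A) cone_map_gen_cone.
  congr gen_cone; apply/setP => x; rewrite finset.in_set [in RHS]finset.in_set.
  apply/mapP/asboolP => [[i _ ->]|/A_atoms [i ->]]; first exact: atomA.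
  by exists i; rewrite ?mem_enum.
apply/seteqP; split => sigma; rewrite /Theta0 /= e.
  by move=> /face_gen_cone [T0 T0_atoms ->]; exists T0.
by move=> [T T_atoms ->]; apply: gen_cone_face T_atoms; apply: dual_basis_atoms.
Qed.

Lemma admissible_orthant : admissible orthant_index.
Proof.
move=> T T_atoms; split; last exact: dual_basis_sub dual_basis_atoms T_atoms.
apply: fintype.subset_trans T_atoms _; apply/fintype.subsetP => a.
by rewrite finset.in_set => /asboolP; apply: building_set_atom.
Qed.

Lemma admissible_foldl D (r : seq L) : admissible D -> {subset r <= G} ->
  admissible (foldl stellar_index D r).
Proof.
elim: r D => [|g r IH] D D_adm rG //=.
apply: IH => [|x xr]; last by apply: rG; rewrite in_cons xr orbT.
by apply: admissible_stellar => //; apply: rG; rewrite mem_head.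
Qed.

Lemma foldl_stellar_cones_of D (r : seq L) : admissible D -> {subset r <= G} ->
  foldl (fun Th g => stellar Th (Vcone A (floor g)) (vX g)) (cones_of D) r
    = cones_of (foldl stellar_index D r).
Proof.
elim: r D => [|g r IH] D D_adm rG //=.
rewrite stellar_cones_of //; apply: IH => [|x xr]; last by apply: rG; rewrite in_cons xr orbT.
by apply: admissible_stellar => //; apply: rG; rewrite mem_head.
Qed.

End StellarModel.

Theorem theorem6p1 (R : realFieldType) (disp : Order.disp_t)
  (L : finTBLatticeType disp) (n : nat) (A : 'I_n -> L) (G : {set L}) (s : seq L) :
  injective A ->
  (forall x : L, is_atom x <-> exists i, x = A i) ->
  atomic L ->
  building_set G ->
  (* s = [:: G_1; ...; G_t] lists G without repetition, along a linear order
     with G <= G' in L implying G' is listed no later than G *)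
  uniq s -> (forall g, g \in s = (g \in G)) ->
  (forall i j, (i < size s)%N -> (j < size s)%N ->
     (nth \bot s i <= nth \bot s j)%O -> (j <= i)%N) ->
  Theta_fan (R:=R) A G s = Sigma_fan A G.
Proof.
move=> A_inj A_atoms L_atomic G_building s_uniq s_G s_sorted.
have sG : {subset s <= G} by move=> g; rewrite s_G.
set D := foldl stellar_index orthant_index s.
have Theta_tildeE : Theta_tilde (R:=R) A s = cones_of A D.
  rewrite /Theta_tilde (Theta0_cones_of R A_inj A_atoms).
  exact: foldl_stellar_cones_of (admissible_orthant R A_inj A_atoms G_building) sG.
have D_adm : admissible R A G D.
  exact: admissible_foldl (admissible_orthant R A_inj A_atoms G_building) sG.
have botG : \bot%O \notin G := G_building.1.
apply/seteqP; split => sigma /=.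
  move=> [+ T_nested]; rewrite Theta_tildeE => -[T DT sigmaE]; subst sigma.
  have [TG T_dual] := D_adm T DT.
  exists T; split; last by rewrite Vcone_gen_cone.
  by apply: T_nested; apply/(gen_index_gen_cone A_atoms L_atomic _ botG TG T_dual).
move=> [S [S_nested ->]].
have DS : D S := nested_in_stellar_index G_building L_atomic s_uniq s_G s_sorted S_nested.
have [SG S_dual] := D_adm S DS.
rewrite Vcone_gen_cone; split; first by rewrite Theta_tildeE; exists S.
by move=> T /(gen_index_gen_cone A_atoms L_atomic _ botG SG S_dual) ->.
Qed.
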